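(* Let $(S,\mu)$ be a complete positive measure space, let $X$ be a real Banach space whose norm is Fréchet differentiable, and let $f\in L^1(\mu,X)$ be non-zero. If $f$ is a right symmetric point of $L^1(\mu,X)$, then $Z(f)^c=\{s\in S:f(s)\neq0\}$ is an atom. Conversely, if $Z(f)^c$ is an atom and $f(s)$ is a right symmetric point of $X$ for each $s\in S$, then $f$ is a right symmetric point of $L^1(\mu,X)$.
   Context: $L^1(\mu,X)$ is the Lebesgue–Bochner space of (classes of a.e. equal) strongly measurable $f:S\to X$ with $\|f\|=\int_S\|f(s)\|\,d\mu(s)<\infty$; $Z(f)=\{s:f(s)=0\}$. In a real normed space $Y$, $x\perp_{BJ}y$ means $\|x+\lambda y\|\ge\|x\|$ for all $\lambda\in\mathbb{R}$; $x$ is a right symmetric point if $y\perp_{BJ}x$ implies $x\perp_{BJ}y$ for all $y\in Y$. The norm of $X$ is Fréchet differentiable if for every non-zero $x$ there is $\varphi\in X^*$ with $\lim_{h\to0}\big|\|x+h\|-\|x\|-\varphi(h)\big|/\|h\|=0$. A measurable set $A$ is an atom if $\mu(A)>0$ and every measurable $B\subseteq A$ has $\mu(B)=0$ or $\mu(B)=\mu(A)$. *)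

From HB Require Import structures.
From mathcomp Require Import all_boot all_order all_algebra.
From mathcomp Require Import all_classical all_reals all_analysis.
Set Implicit Arguments. Unset Strict Implicit. Unset Printing Implicit Defensive.
Import Order.TTheory GRing.Theory Num.Theory.
Import numFieldNormedType.Exports.
Local Open Scope classical_set_scope.
Local Open Scope ring_scope.

Definition bj_orth (R : realType) (Y : normedModType R) (x y : Y) : Prop :=
  forall lam : R, `|x| <= `|x + lam *: y|.

Definition right_symmetric (R : realType) (Y : normedModType R) (x : Y) : Prop :=
  forall y : Y, bj_orth y x -> bj_orth x y.

Definition frechet_differentiable_norm (R : realType) (X : normedModType R) : Prop :=
  forall x : X, x != 0 ->
    exists phi : X -> R,
      (forall (a : R) (u v : X), phi (a *: u + v) = a * phi u + phi v) /\
      continuous phi /\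
      (fun h : X => (`|x + h| - `|x| - phi h) / `|h|) @ 0^' --> (0 : R).

Definition simple_fun d (S : measurableType d) (R : realType) (X : normedModType R)
    (g : S -> X) : Prop :=
  finite_set (range g) /\ forall x : X, measurable (g @^-1` [set x]).

Definition strongly_measurable d (S : measurableType d) (R : realType)
    (X : normedModType R) (mu : {measure set S -> \bar R}) (f : S -> X) : Prop :=
  exists g : nat -> S -> X, (forall n, simple_fun (g n)) /\
    {ae mu, forall s, (fun n => g n s) @ \oo --> f s}.

Definition L1norm d (S : measurableType d) (R : realType) (X : normedModType R)
    (mu : {measure set S -> \bar R}) (f : S -> X) : \bar R :=
  (\int[mu]_s (`|f s|)%:E)%E.

Definition bochner_L1 d (S : measurableType d) (R : realType) (X : normedModType R)
    (mu : {measure set S -> \bar R}) (f : S -> X) : Prop :=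
  strongly_measurable mu f /\ (L1norm mu f < +oo)%E.

(* Birkhoff-James orthogonality in L^1(mu, X) (computed on representatives;
   the norm of the class of f is L1norm mu f) *)
Definition bj_orth_L1 d (S : measurableType d) (R : realType) (X : normedModType R)
    (mu : {measure set S -> \bar R}) (f g : S -> X) : Prop :=
  forall lam : R, (L1norm mu f <= L1norm mu (fun s => (f s + lam *: g s)%R))%E.

Definition right_symmetric_L1 d (S : measurableType d) (R : realType)
    (X : normedModType R) (mu : {measure set S -> \bar R}) (f : S -> X) : Prop :=
  forall g : S -> X, bochner_L1 mu g -> bj_orth_L1 mu g f -> bj_orth_L1 mu f g.

Definition atom d (S : measurableType d) (R : realType)
    (mu : {measure set S -> \bar R}) (A : set S) : Prop :=
  measurable A /\ (0 < mu A)%E /\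
  forall B, measurable B -> B `<=` A -> mu B = 0%E \/ mu B = mu A.

Definition nonzero_set (S : Type) (R : realType) (X : normedModType R) (f : S -> X)
  : set S := [set s | f s != 0].

(* Let A := Z(f)^c.  If A contains a measurable B with mu B <> 0 and
   mu (A \ B) <> 0, one of D = B, D = ~B satisfies 0 < a <= c, where
   a := int_D |f| and c := int_~D |f|.  For g := f 1_D,
   |g + l f| = |1 + l| a + |l| c >= (|1 + l| + |l|) a >= a = |g|, so g is
   orthogonal to f, while |f - g| = c < a + c = |f|, so f is not orthogonal
   to g.  Conversely, if A is an atom it has finite measure because f is
   integrable, and strongly measurable functions are a.e. constant on an atom
   of finite measure.  If g has the value y and f the value x = f s0 on A, then
   |g + l f| = |y + l x| mu A + int_~A |g| and |f + l g| >= |x + l y| mu A,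
   so g orthogonal to f forces y orthogonal to x, hence x orthogonal to y,
   hence f orthogonal to g.  Completeness of mu makes the norms of strongly
   measurable functions measurable. *)

From HB Require Import structures.
From mathcomp Require Import all_boot all_order all_algebra.
From mathcomp Require Import all_classical all_reals all_analysis.
From mathcomp Require Import measurable_realfun lra.
Import Order.TTheory GRing.Theory Num.Theory.
Import numFieldNormedType.Exports.
Local Open Scope classical_set_scope.
Local Open Scope ring_scope.
Set Implicit Arguments. Unset Strict Implicit.

Section Measurability.
Context d (S : measurableType d) (R : realType) (X : normedModType R)
  (mu : {measure set S -> \bar R}).

Lemma measurable_fun_simple_fun2 (g1 g2 : S -> X) (F : X -> X -> R) :
  simple_fun g1 -> simple_fun g2 -> measurable_fun setT (fun s => F (g1 s) (g2 s)).
Proof.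
move=> [fin1 mg1] [fin2 mg2] _ Y _; rewrite setTI.
have -> : (fun s => F (g1 s) (g2 s)) @^-1` Y =
    \bigcup_(p in (range g1 `*` range g2) `&` [set p | Y (F p.1 p.2)])
      (g1 @^-1` [set p.1] `&` g2 @^-1` [set p.2]).
  apply/seteqP; split => [s Ys|s [p [_ Yp] [/= -> ->]]] //.
  by exists (g1 s, g2 s) => //; split => //; split; exists s.
apply: fin_bigcup_measurable => [|p _]; last exact: measurableI.
exact: finite_setIl (finite_setX fin1 fin2).
Qed.

Lemma simple_fun_patch0 (g : S -> X) (D : set S) :
  measurable D -> simple_fun g -> simple_fun (patch (fun=> 0) D g).
Proof.
move=> mD [fin mg]; split.
  apply: (@sub_finite_set _ _ (range g `|` [set 0])); last first.
    by rewrite finite_setU; split => //; exact: finite_set1.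
  by move=> _ [s _ <-]; rewrite /patch; case: ifP => _; [left; exists s|right].
move=> x; have -> : patch (fun=> 0) D g @^-1` [set x] =
    (D `&` g @^-1` [set x]) `|` (~` D `&` [set _ | 0 = x]).
  apply/seteqP; split => s; rewrite /patch /=.
    by case: ifPn => [/set_mem|/negP nD]; [left|right; split => // /mem_set].
  by case=> -[Ds ->]; [rewrite mem_set|rewrite memNset].
apply: measurableU; first exact: measurableI.
apply: measurableI; first exact: measurableC.
have [<-|x0] := eqVneq 0 x; first by rewrite (_ : [set _ | _] = setT) //; apply/seteqP.
rewrite (_ : [set _ | _] = set0) //.
by apply/seteqP; split => // s /= /eqP; rewrite (negbTE x0).
Qed.

Lemma strongly_measurable_patch0 (h : S -> X) (D : set S) :
  measurable D -> strongly_measurable mu h ->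
  strongly_measurable mu (patch (fun=> 0) D h).
Proof.
move=> mD [g [sg cg]]; exists (fun n => patch (fun=> 0) D (g n)); split.
  by move=> n; exact: simple_fun_patch0.
by apply: filterS cg => s gs; rewrite /patch; case: ifP => _ //; exact: cvg_cst.
Qed.

Hypothesis mu_complete : measure_is_complete mu.

Lemma measurable_fun_complete (G : set S) (h : S -> R) :
  mu.-negligible (~` G) -> measurable_fun G h -> measurable_fun setT h.
Proof.
move=> nG mh _ Y mY; rewrite setTI.
have mG : measurable G by rewrite -(setCK G); apply: measurableC; exact: mu_complete.
rewrite -(setIT (h @^-1` Y)) -(setUCr G) setIUr.
apply: measurableU; first by rewrite setIC; exact: mh.
by apply: mu_complete; apply: negligibleS nG; exact: subIsetr.
Qed.

Lemma measurable_fun_strongly_measurable2 (h1 h2 : S -> X) (F : X -> X -> R) :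
  strongly_measurable mu h1 -> strongly_measurable mu h2 ->
  (forall (a b : nat -> X) u v, a @ \oo --> u -> b @ \oo --> v ->
     (fun n => F (a n) (b n)) @ \oo --> F u v) ->
  measurable_fun setT (fun s => F (h1 s) (h2 s)).
Proof.
move=> [g1 [sg1 cg1]] [g2 [sg2 cg2]] Fcvg.
pose G := [set s | (fun n => g1 n s) @ \oo --> h1 s /\ (fun n => g2 n s) @ \oo --> h2 s].
apply: (@measurable_fun_complete G); first by apply: filterS2 cg1 cg2.
apply: (measurable_fun_cvg (D := G)
  (h := fun n s => F (g1 n s) (g2 n s))).
  by move=> n; apply: measurable_funS (measurable_fun_simple_fun2 F (sg1 n) (sg2 n)).
by move=> s [c1 c2]; exact: Fcvg.
Qed.

Lemma measurable_fun_normDZ (lam : R) (h1 h2 : S -> X) :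
  strongly_measurable mu h1 -> strongly_measurable mu h2 ->
  measurable_fun setT (fun s => `|h1 s + lam *: h2 s|).
Proof.
move=> m1 m2; apply: (measurable_fun_strongly_measurable2
  (F := fun a b => `|a + lam *: b|)) m1 m2 _ => a b u v au bv.
by apply: cvg_norm; apply: cvgD au _; apply: cvgZ bv; exact: cvg_cst.
Qed.

Lemma measurable_fun_norm (h : S -> X) :
  strongly_measurable mu h -> measurable_fun setT (fun s => `|h s|).
Proof.
move=> m; apply: eq_measurable_fun (measurable_fun_normDZ 0 m m) => s _.
by rewrite scale0r addr0.
Qed.

Lemma measurable_nonzero_set (h : S -> X) :
  strongly_measurable mu h -> measurable (nonzero_set h).
Proof.
move=> m; rewrite -(setTI (nonzero_set h)).
have -> : nonzero_set h = (fun s => `|h s|) @^-1` (~` [set 0]).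
  apply/seteqP; split => s; rewrite /nonzero_set /= -normr_eq0;
  by [move/eqP | move=> ?; apply/eqP].
exact: measurable_fun_norm m measurableT _ (measurableC (measurable_set1 _)).
Qed.

End Measurability.

Lemma measurable_funT_EFin d (S : measurableType d) (R : realType) (D : set S)
    (F : S -> R) :
  measurable_fun setT F -> measurable_fun D (fun s => (F s)%:E).
Proof.
by move=> mF; apply: (measurable_funS measurableT) => //; exact/measurable_EFinP.
Qed.

Section NonnegIntegral.
Context d (S : measurableType d) (R : realType) (mu : {measure set S -> \bar R}).
Variable F : S -> R.
Hypotheses (mF : measurable_fun setT F) (F_ge0 : forall s, 0 <= F s).
Local Open Scope ereal_scope.

Let mFE (D : set S) : measurable_fun D (fun s => (F s)%:E).
Proof. exact: measurable_funT_EFin. Qed.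

Let FE_ge0 (D : set S) s : D s -> 0 <= (F s)%:E.
Proof. by rewrite lee_fin. Qed.

Let abs_FE s : `|(F s)%:E| = (F s)%:E.
Proof. by rewrite gee0_abs ?lee_fin. Qed.

Lemma ge0_integral_setC (D : set S) : measurable D ->
  \int[mu]_s (F s)%:E = \int[mu]_(s in D) (F s)%:E + \int[mu]_(s in ~` D) (F s)%:E.
Proof.
move=> mD; rewrite -ge0_integral_setU ?setUCr //.
- exact: measurableC.
- exact: FE_ge0.
- exact/disj_setPCl.
Qed.

Lemma ge0_integral_real (D : set S) : measurable D -> \int[mu]_s (F s)%:E < +oo ->
  exists2 r : R, \int[mu]_(s in D) (F s)%:E = r%:E & (0 <= r)%R.
Proof.
move=> mD Ffin.
have I_ge0 : 0 <= \int[mu]_(s in D) (F s)%:E by apply: integral_ge0; exact: FE_ge0.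
have I_fin : \int[mu]_(s in D) (F s)%:E < +oo.
  by apply: le_lt_trans Ffin; apply: ge0_subset_integral => //; exact: FE_ge0.
exists (fine (\int[mu]_(s in D) (F s)%:E)); first by rewrite fineK // ge0_fin_numE.
by rewrite fine_ge0.
Qed.

Lemma ge0_integral_gt0 (D : set S) : measurable D ->
  (forall s, D s -> F s != 0%R) -> mu D != 0 -> 0 < \int[mu]_(s in D) (F s)%:E.
Proof.
move=> mD FD; apply: contraTT; rewrite lt0e integral_ge0 ?andbT ?negbK; last first.
  exact: FE_ge0.
move=> /eqP I0; have : \int[mu]_(s in D) `|(F s)%:E| = 0 by under eq_integral do rewrite abs_FE.
move/(ae_eq_integral_abs mu mD (@mFE D)) => [N [mN N0 DN]].
apply/eqP; apply: subset_measure0 N0 => // s Ds; apply: DN => /(_ Ds) [] /eqP.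
by apply/negP; exact: FD.
Qed.

Lemma ge0_integral_measure_ge_fin (e : R) : (0 < e)%R ->
  \int[mu]_s (F s)%:E < +oo -> mu [set s | (e <= F s)%R] < +oo.
Proof.
move=> e0 Ffin; have := le_integral_abse mu measurableT (@mFE setT) e0.
rewrite setTI (_ : [set s | _] = [set s | (e <= F s)%R]); last first.
  by apply/seteqP; split => s; rewrite /= lee_fin ger0_norm.
under eq_integral do rewrite abs_FE.
move=> /le_lt_trans/(_ Ffin) eF_fin; rewrite ltNge leye_eq.
by apply: contraTN eF_fin => /eqP ->; rewrite gt0_muley ?lte_fin // ltxx.
Qed.

End NonnegIntegral.

Section Atom.
Context d (S : measurableType d) (R : realType) (mu : {measure set S -> \bar R}).
Local Open Scope ereal_scope.

Lemma atom_measure_fin (A : set S) (B : nat -> set S) :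
  atom mu A -> (forall n, measurable (B n)) -> (forall n, B n `<=` A) ->
  (forall n, mu (B n) < +oo) -> A `<=` \bigcup_n B n -> mu A < +oo.
Proof.
move=> [mA [A_gt0 A_atom]] mB BA B_fin AB; rewrite ltNge leye_eq.
apply: contraTN A_gt0 => /eqP Aoo; rewrite -leNgt le_eqVlt; apply/orP; left.
apply/eqP/(measure_negligible mA)/(negligibleS AB)/negligible_bigcup => n.
apply/negligibleP => //; have [//|Bn] := A_atom _ (mB n) (BA n).
by move: (B_fin n); rewrite Bn Aoo ltxx.
Qed.

Variables (X : normedModType R) (A : set S).
Hypotheses (A_atom : atom mu A) (A_fin : mu A < +oo).

Lemma atom_ae_eq_simple_fun (g : S -> X) :
  simple_fun g -> exists c, {ae mu, forall s, A s -> g s = c}.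
Proof.
have [mA [A_gt0 A_dichotomy]] := A_atom; move=> [g_fin mg].
have mAg c : measurable (A `&` g @^-1` [set c]) by exact: measurableI.
have [c Ac] : exists c, mu (A `&` g @^-1` [set c]) != 0.
  apply: contrapT => /forallNP Ag0.
  have : mu A <= mu (\bigcup_(c in range g) (A `&` g @^-1` [set c])).
    apply: le_measure; rewrite ?inE //; first exact: fin_bigcup_measurable.
    by move=> s As; exists (g s); [exists s|split].
  rewrite measure_fin_bigcup //; last by move=> i j _ _ [s [[_ <-] [_ <-]]].
  rewrite fsbig1 => [|c _]; first by rewrite leNgt A_gt0.
  by apply/eqP/negbNE/negP; exact: Ag0.
exists c, (A `\` g @^-1` [set c]); split; first exact: measurableD.
  have [/eqP|Ag] := A_dichotomy _ (mAg c) (@subIsetl _ _ _); first by rewrite (negbTE Ac).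
  rewrite measureD //; transitivity (mu A - mu A); first by congr (_ - _).
  by rewrite subee // ge0_fin_numE.
by move=> s /= /not_implyP.
Qed.

Lemma atom_ae_eq_strongly_measurable (h : S -> X) : strongly_measurable mu h ->
  exists2 s0, A s0 & {ae mu, forall s, A s -> h s = h s0}.
Proof.
have [mA [A_gt0 _]] := A_atom; move=> [g [sg cg]].
have [c gc] := choice (fun n => atom_ae_eq_simple_fun (sg n)).
have G : {ae mu, forall s, (forall n, A s -> g n s = c n) /\
                           (fun n => g n s) @ \oo --> h s}.
  by apply: filterS2 (ae_foralln gc) cg => s.
have [s0 As0 [gs0 cs0]] : exists2 s0, A s0 & (forall n, A s0 -> g n s0 = c n) /\
                           (fun n => g n s0) @ \oo --> h s0.
  apply: contrapT => nG; move: A_gt0; rewrite (measure_negligible mA) ?ltxx //.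
  by apply: negligibleS G => s As Gs; apply: nG; exists s.
exists s0 => //; apply: filterS G => s [gs cs] As.
have gss0 : (fun n => g n s) = (fun n => g n s0).
  by apply/funext => n; rewrite gs // gs0.
by rewrite -(norm_cvg_lim cs) -(norm_cvg_lim cs0) gss0.
Qed.

End Atom.

Section L1norm.
Context d (S : measurableType d) (R : realType) (X : normedModType R)
  (mu : {measure set S -> \bar R}).

Lemma L1norm_setC_scale (h f : S -> X) (D : set S) (a b : R) : measurable D ->
  measurable_fun setT (fun s => `|h s|) -> measurable_fun setT (fun s => `|f s|) ->
  (forall s, D s -> h s = a *: f s) -> (forall s, ~ D s -> h s = b *: f s) ->
  L1norm mu h = (`|a|%:E * \int[mu]_(s in D) `|f s|%:E +
                 `|b|%:E * \int[mu]_(s in ~` D) `|f s|%:E)%E.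
Proof.
move=> mD mh mf hD hC; rewrite /L1norm (ge0_integral_setC mu mh (fun s => normr_ge0 _) mD).
have scale (E : set S) c : measurable E -> (forall s, E s -> h s = c *: f s) ->
    (\int[mu]_(s in E) `|h s|%:E = `|c|%:E * \int[mu]_(s in E) `|f s|%:E)%E.
  move=> mE hE; rewrite -ge0_integralZl_EFin //.
  - by apply: eq_integral => s /set_mem Es; rewrite hE // normrZ EFinM.
  - exact: measurable_funT_EFin.
by rewrite (scale D a) // (scale (~` D) b) //; exact: measurableC.
Qed.

Lemma L1norm_ae_const (h : S -> X) (A : set S) (u : X) : measurable A ->
  measurable_fun setT (fun s => `|h s|) -> {ae mu, forall s, A s -> h s = u} ->
  L1norm mu h = (`|u|%:E * mu A + \int[mu]_(s in ~` A) `|h s|%:E)%E.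
Proof.
move=> mA mh hA; rewrite /L1norm (ge0_integral_setC mu mh (fun s => normr_ge0 _) mA).
rewrite -integral_cst //; congr (_ + _)%E; apply: ae_eq_integral => //.
- exact: measurable_funT_EFin.
- by apply: filterS hA => s hs As; rewrite /= hs.
Qed.

End L1norm.

Section RightSymmetricL1.
Context d (S : measurableType d) (R : realType) (X : normedModType R)
  (mu : {measure set S -> \bar R}).
Hypothesis mu_complete : measure_is_complete mu.

Lemma nonzero_setN (f : S -> X) s : ~ nonzero_set f s -> f s = 0.
Proof. by rewrite /nonzero_set /= => /negP; rewrite negbK => /eqP. Qed.

Lemma atom_nonzero_set_fin (f : S -> X) : bochner_L1 mu f ->
  atom mu (nonzero_set f) -> (mu (nonzero_set f) < +oo)%E.
Proof.
move=> [mf f_fin] A_atom; have mF := measurable_fun_norm mu_complete mf.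
apply: (atom_measure_fin (B := fun n => [set s | n.+1%:R^-1 <= `|f s|]) A_atom).
- move=> n; rewrite -[X in measurable X]setTI.
  rewrite (_ : [set s | _] = (fun s => `|f s|) @^-1` `[n.+1%:R^-1, +oo[); last first.
    by apply/seteqP; split => s; rewrite /= in_itv /= andbT.
  exact: mF measurableT _ (measurable_itv _).
- move=> n s /=; rewrite /nonzero_set /= -normr_gt0; apply: lt_le_trans.
  by rewrite invr_gt0.
- move=> n /=; have n_gt0 : 0 < n.+1%:R^-1 :> R by rewrite invr_gt0.
  exact (ge0_integral_measure_ge_fin mF (fun s => normr_ge0 _) n_gt0 f_fin).
- move=> s fs0; have fs_gt0 : 0 < `|f s| by rewrite normr_gt0.
  have [N _ /(_ N (leqnn N)) fsN] := near_infty_natSinv_lt (PosNum fs_gt0).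
  by exists N => //; exact: ltW.
Qed.

Lemma not_right_symmetric_L1 (f : S -> X) (D : set S) :
  strongly_measurable mu f -> (L1norm mu f < +oo)%E -> measurable D ->
  (0 < \int[mu]_(s in D) `|f s|%:E)%E ->
  (\int[mu]_(s in D) `|f s|%:E <= \int[mu]_(s in ~` D) `|f s|%:E)%E ->
  ~ right_symmetric_L1 mu f.
Proof.
move=> mf f_fin mD fD_gt0 fD_le /(_ (patch (fun=> 0) D f)).
set g := patch _ D f.
have mg : strongly_measurable mu g := strongly_measurable_patch0 mD mf.
have gD s : D s -> g s = f s by move=> Ds; rewrite /g /patch mem_set.
have gC s : ~ D s -> g s = 0 by move=> Ds; rewrite /g /patch memNset.
have mF := measurable_fun_norm mu_complete mf.
have [a Ia _] := ge0_integral_real mF (fun s => normr_ge0 _) mD f_fin.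
have [c Ic _] := ge0_integral_real mF (fun s => normr_ge0 _) (measurableC mD) f_fin.
move: fD_gt0 fD_le; rewrite Ia Ic !lte_fin lee_fin => a_gt0 ac.
have L1normE (h : S -> X) (a' c' : R) : measurable_fun setT (fun s => `|h s|) ->
    (forall s, D s -> h s = a' *: f s) -> (forall s, ~ D s -> h s = c' *: f s) ->
    L1norm mu h = (`|a'| * a + `|c'| * c)%:E.
  by move=> mh hD hC; rewrite (L1norm_setC_scale mu mD mh mF hD hC) Ia Ic.
have Lg : L1norm mu g = a%:E.
  rewrite (L1normE g 1 0) ?normr1 ?normr0 ?mul1r ?mul0r ?addr0 //.
  - exact (measurable_fun_norm mu_complete mg).
  - by move=> s Ds; rewrite gD // scale1r.
  - by move=> s Ds; rewrite gC // scale0r.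
have gf : bj_orth_L1 mu g f.
  move=> lam; rewrite Lg (L1normE _ (1 + lam) lam) ?lee_fin.
  - have := ler_normD (1 + lam) (- lam); rewrite normrN addrK normr1.
    by have := normr_ge0 (1 + lam); have := normr_ge0 lam; nra.
  - exact (measurable_fun_normDZ mu_complete lam mg mf).
  - by move=> s Ds; rewrite gD // scalerDl scale1r.
  - by move=> s Ds; rewrite gC // add0r.
have g_L1 : bochner_L1 mu g by split => //; rewrite Lg ltry.
have Lf : L1norm mu f = (a + c)%:E.
  by rewrite (L1normE f 1 1) ?normr1 ?mul1r // => s _; rewrite scale1r.
have Lfg : L1norm mu (fun s => f s + (-1) *: g s) = c%:E.
  rewrite (L1normE _ 0 1) ?normr0 ?normr1 ?mul0r ?mul1r ?add0r //.
  - exact (measurable_fun_normDZ mu_complete (-1) mf mg).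
  - by move=> s Ds; rewrite gD // scaleN1r subrr scale0r.
  - by move=> s Ds; rewrite gC // scaler0 addr0 scale1r.
move=> /(_ g_L1 gf (-1)); rewrite Lf Lfg lee_fin gerDr.
by rewrite leNgt a_gt0.
Qed.

Lemma right_symmetric_L1_atom (f : S -> X) : bochner_L1 mu f ->
  L1norm mu f <> 0%E -> right_symmetric_L1 mu f -> atom mu (nonzero_set f).
Proof.
move=> [mf f_fin] f_neq0 f_rs; set A := nonzero_set f.
have mF := measurable_fun_norm mu_complete mf.
have mA : measurable A := measurable_nonzero_set mu_complete mf.
have int_gt0 B : measurable B -> B `<=` A -> mu B != 0 ->
    (0 < \int[mu]_(s in B) `|f s|%:E)%E.
  move=> mB BA; apply: (ge0_integral_gt0 mF (fun s => normr_ge0 _) mB) => s /BA.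
  by rewrite normr_eq0.
split => //; split.
  rewrite lt0e measure_ge0 andbT; apply: contra_notN f_neq0 => /eqP A0.
  rewrite /L1norm (ge0_integral_setC mu mF (fun s => normr_ge0 _) mA).
  rewrite null_set_integral ?add0e //; last exact: measurable_funT_EFin.
  by apply: integral0_eq => s /nonzero_setN ->; rewrite normr0.
move=> B mB BA; apply: contrapT => /not_orP [B0 BA'].
have AB0 : mu (A `\` B) != 0.
  apply: contra_notN BA' => /eqP AB0.
  have := measureDI mu mA mB; rewrite setIidr // => ->.
  by rewrite -[LHS]add0e; congr (_ + _)%E; exact/esym.
have IB := int_gt0 B mB BA (introN eqP B0).
have IAB := int_gt0 _ (measurableD mA mB) (@subDsetl _ _ _) AB0.
have [IB_le|IB_gt] :=
  leP (\int[mu]_(s in B) `|f s|%:E)%E (\int[mu]_(s in ~` B) `|f s|%:E)%E.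
  exact: not_right_symmetric_L1 mf f_fin mB IB IB_le f_rs.
apply: not_right_symmetric_L1 mf f_fin (measurableC mB) _ _ f_rs;
  last by rewrite setCK ltW.
apply: lt_le_trans IAB _; apply: ge0_subset_integral => //.
- exact: measurableD.
- exact: measurableC.
- exact: measurable_funT_EFin.
Qed.

Lemma right_symmetric_L1_of_atom (f : S -> X) : bochner_L1 mu f ->
  atom mu (nonzero_set f) -> (forall s, right_symmetric (f s)) ->
  right_symmetric_L1 mu f.
Proof.
move=> [mf f_fin] A_atom f_rs g [mg g_fin] gf lam; set A := nonzero_set f.
have A_fin := atom_nonzero_set_fin (conj mf f_fin) A_atom.
have [mA [A_gt0 _]] := A_atom.
have [s0 _ fA] := atom_ae_eq_strongly_measurable A_atom A_fin mf.
have [t0 _ gA] := atom_ae_eq_strongly_measurable A_atom A_fin mg.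
have [m Am m_gt0] : exists2 m : R, mu A = m%:E & 0 < m.
  have A_fin_num : mu A \is a fin_num by rewrite ge0_fin_numE.
  by exists (fine (mu A)); rewrite ?fineK // -lte_fin fineK.
have mG := measurable_fun_norm mu_complete mg.
have [c Ic _] := ge0_integral_real mG (fun s => normr_ge0 _) (measurableC mA) g_fin.
have L1normDZ (h1 h2 : S -> X) u v k :
    strongly_measurable mu h1 -> strongly_measurable mu h2 ->
    {ae mu, forall s, A s -> h1 s = u} -> {ae mu, forall s, A s -> h2 s = v} ->
    L1norm mu (fun s => h1 s + k *: h2 s) =
      ((`|u + k *: v| * m)%:E + \int[mu]_(s in ~` A) `|h1 s + k *: h2 s|%:E)%E.
  move=> m1 m2 h1A h2A.
  have mh := measurable_fun_normDZ mu_complete k m1 m2.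
  rewrite (L1norm_ae_const (u := u + k *: v) mA mh).
  - by rewrite Am.
  - by apply: filterS2 h1A h2A => s e1 e2 As; rewrite e1 ?e2.
have Lg : L1norm mu g = (`|g t0| * m + c)%:E.
  by rewrite (L1norm_ae_const mA mG gA) Am Ic.
have Lgf k : L1norm mu (fun s => g s + k *: f s) = (`|g t0 + k *: f s0| * m + c)%:E.
  rewrite (L1normDZ _ _ _ _ _ mg mf gA fA) EFinD -Ic; congr (_ + _)%E.
  by apply: eq_integral => s /set_mem /nonzero_setN ->; rewrite scaler0 addr0.
have yx : bj_orth (g t0) (f s0).
  by move=> k; have := gf k; rewrite Lg Lgf lee_fin lerD2r ler_pM2r.
have Lf : L1norm mu f = (`|f s0| * m)%:E.
  rewrite (L1norm_ae_const mA (measurable_fun_norm mu_complete mf) fA) Am.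
  by rewrite integral0_eq ?adde0 // => s /nonzero_setN ->; rewrite normr0.
rewrite Lf (L1normDZ _ _ _ _ _ mf mg fA gA); apply: le_trans (leeDl _ _).
  by rewrite lee_fin ler_pM2r //; exact: f_rs yx lam.
by apply: integral_ge0 => s _; rewrite lee_fin.
Qed.

End RightSymmetricL1.

Unset Implicit Arguments. Set Strict Implicit.

Theorem theorem3p10 (d : measure_display) (S : measurableType d) (R : realType)
    (X : completeNormedModType R) (mu : {measure set S -> \bar R})
    (f : S -> X) :
  measure_is_complete mu ->
  frechet_differentiable_norm X ->
  bochner_L1 mu f ->
  L1norm mu f <> 0%E ->
  (right_symmetric_L1 mu f -> atom mu (nonzero_set f)) /\
  (atom mu (nonzero_set f) -> (forall s, right_symmetric (f s)) ->
     right_symmetric_L1 mu f).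
Proof.
move=> mu_complete _ f_L1 f_neq0; split.
  exact (right_symmetric_L1_atom mu_complete f_L1 f_neq0).
exact (right_symmetric_L1_of_atom mu_complete f_L1).
Qed.
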